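(* Let $1\to N\xrightarrow{i}G\xrightarrow{p}\Gamma\to1$ be a short exact sequence of groups. Then \[\dim_{\mathbb{R}}\mathrm{W}(G,N)=\dim_{\mathbb{R}}\mathrm{Im}(\mathbf d\circ\tau_{/b})+\dim_{\mathbb{R}}\Big(\frac{\mathrm{Im}\,c_G^2\cap\mathrm{Im}\,p^*}{\mathrm{Im}(p^*\circ c_\Gamma^2)}\Big).\] In particular, $\dim_{\mathbb{R}}\mathrm{W}(G,N)\le\dim_{\mathbb{R}}\mathrm{Ker}\,c_\Gamma^3+\dim_{\mathbb{R}}\mathrm{H}^2(G)$.
   Context: All cohomology has trivial real coefficients. For a group $H$, $\mathrm{C}^n(H)$ is the space of real functions on $H^n$ with the standard inhomogeneous coboundary $\delta$ (e.g. $\delta\phi(h_1,h_2)=\phi(h_2)-\phi(h_1h_2)+\phi(h_1)$ for $\phi\in\mathrm{C}^1(H)$), $\mathrm{C}_b^n(H)$ the bounded functions, $\mathrm{H}^n$, $\mathrm{H}^n_b$ the cohomologies, $c_H^n\colon\mathrm{H}^n_b(H)\to\mathrm{H}^n(H)$ the comparison map. $\mathrm{C}^*_{/b}(H)=\mathrm{C}^*(H)/\mathrm{C}^*_b(H)$ with cohomology $\mathrm{H}^*_{/b}(H)$; $j$ denotes the quotient $\mathrm{C}^*(H)\to\mathrm{C}^*_{/b}(H)$, and $\mathbf d\colon\mathrm{H}^2_{/b}(\Gamma)\to\mathrm{H}^3_b(\Gamma)$ is the connecting map of $0\to\mathrm{C}_b^*\to\mathrm{C}^*\to\mathrm{C}^*_{/b}\to0$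 (induced by $\delta$). $p^*\colon\mathrm{H}^2(\Gamma)\to\mathrm{H}^2(G)$. $\mathrm{Q}(H)$: homogeneous quasimorphisms on $H$; $\mathrm{Q}(N)^G$: those on $N$ invariant under conjugation by $G$; $\mathrm{H}^1(N)^G$: $G$-invariant homomorphisms $N\to\mathbb{R}$; $i^*\colon\mathrm{Q}(G)\to\mathrm{Q}(N)^G$ is restriction. $\mathrm{W}(G,N)=\mathrm{Q}(N)^G/(\mathrm{H}^1(N)^G+i^*\mathrm{Q}(G))$. The map $\tau_{/b}\colon\mathrm{Q}(N)^G\to\mathrm{H}^2_{/b}(\Gamma)$: choose a set-theoretic section $s\colon\Gamma\to G$ of $p$ with $s(1)=1$, put $\mu_s(g)=\mu(g\cdot(s(p(g)))^{-1})$, and $\tau_{/b}(\mu)=[j(s^*\delta\mu_s)]$ where $(s^*\delta\mu_s)(\gamma_1,\gamma_2)=\delta\mu_s(s(\gamma_1),s(\gamma_2))$ (independent of $s$). *)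

From HB Require Import structures.
From mathcomp Require Import all_boot all_order all_algebra.
From mathcomp Require Import boolp classical_sets functions reals constructive_ereal ereal.
From mathcomp Require Import Rstruct.

Set Implicit Arguments.
Unset Strict Implicit.
Unset Printing Implicit Defensive.

Import Order.TTheory GRing.Theory Num.Theory.
Local Open Scope ring_scope.
Local Open Scope classical_set_scope.

Notation RR := Rdefinitions.R.

(* Real cochains (trivial real coefficients), inhomogeneous, degrees 1..4.
   C^n(H) = real functions on H^n; we use curried functions with values
   in RR^o so that they carry their natural real vector space structure. *)
Definition C1 (H : groupType) := H -> RR^o.
Definition C2 (H : groupType) := H -> H -> RR^o.
Definition C3 (H : groupType) := H -> H -> H -> RR^o.
Definition C4 (H : groupType) := H -> H -> H -> H -> RR^o.

Definition delta1 (H : groupType) (f : C1 H) : C2 H :=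
  fun h1 h2 => f h2 - f (h1 * h2)%g + f h1.
Definition delta2 (H : groupType) (f : C2 H) : C3 H :=
  fun h1 h2 h3 => f h2 h3 - f (h1 * h2)%g h3 + f h1 (h2 * h3)%g - f h1 h2.
Definition delta3 (H : groupType) (f : C3 H) : C4 H :=
  fun h1 h2 h3 h4 => f h2 h3 h4 - f (h1 * h2)%g h3 h4 + f h1 (h2 * h3)%g h4
                     - f h1 h2 (h3 * h4)%g + f h1 h2 h3.

Definition bounded1 (H : groupType) (f : C1 H) : Prop :=
  exists M : RR, forall h, `|f h| <= M.
Definition bounded2 (H : groupType) (f : C2 H) : Prop :=
  exists M : RR, forall h1 h2, `|f h1 h2| <= M.
Definition bounded3 (H : groupType) (f : C3 H) : Prop :=
  exists M : RR, forall h1 h2 h3, `|f h1 h2 h3| <= M.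

Definition Z2 (H : groupType) : set (C2 H) := [set z | delta2 z = 0].
Definition B2 (H : groupType) : set (C2 H) := [set delta1 f | f in [set: C1 H]].
Definition Zb2 (H : groupType) : set (C2 H) := [set z | bounded2 z /\ delta2 z = 0].
Definition Zb3 (H : groupType) : set (C3 H) := [set z | bounded3 z /\ delta3 z = 0].
Definition Bb3 (H : groupType) : set (C3 H) := [set delta2 f | f in bounded2 (H:=H)].
Definition B3 (H : groupType) : set (C3 H) := [set delta2 f | f in [set: C2 H]].

Definition sumset (V : zmodType) (A B : set V) : set V :=
  [set v | exists a b, A a /\ B b /\ v = a + b].

(* For subspaces A, B of a real vector space V,
   [qdim A B] is the dimension of the image of A in V / B, i.e. of
   (A + B) / B, as an extended real (a natural number or +oo):
   the supremum of the k such that there are k vectors of A that are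
   linearly independent modulo B. *)
Definition qdim_ge (V : lmodType RR) (A B : set V) (k : nat) : Prop :=
  exists v : 'I_k -> V, (forall j, A (v j)) /\
    forall c : 'I_k -> RR, B (\sum_(j < k) c j *: v j) -> forall j, c j = 0.

Definition qdim (V : lmodType RR) (A B : set V) : \bar RR :=
  ereal_sup [set (k%:R)%:E | k in qdim_ge A B].

Definition group_hom (H K : groupType) (f : H -> K) : Prop :=
  forall x y, f (x * y)%g = (f x * f y)%g.

Definition short_exact (N G Gam : groupType) (i : N -> G) (p : G -> Gam) : Prop :=
  [/\ group_hom i, group_hom p, injective i, (forall y, exists x, p x = y) &
      forall g, p g = 1%g <-> exists n, i n = g].

Definition quasimorphism (H : groupType) (f : C1 H) : Prop := bounded2 (delta1 f).
Definition homogeneous (H : groupType) (f : C1 H) : Prop :=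
  forall (h : H) (n : nat), f (h ^+ n)%g = n%:R * f h.
Definition Q (H : groupType) : set (C1 H) :=
  [set f | quasimorphism f /\ homogeneous f].

Definition Hom1 (H : groupType) : set (C1 H) :=
  [set f | forall x y, f (x * y)%g = f x + f y].

Definition G_invariant (N G : groupType) (i : N -> G) (f : C1 N) : Prop :=
  forall (g : G) (n n' : N), i n' = (g * i n * g^-1)%g -> f n' = f n.

Definition QNG (N G : groupType) (i : N -> G) : set (C1 N) :=
  [set f | Q f /\ G_invariant i f].
Definition H1NG (N G : groupType) (i : N -> G) : set (C1 N) :=
  [set f | Hom1 f /\ G_invariant i f].
Definition restrQ (N G : groupType) (i : N -> G) : set (C1 N) :=
  [set (fun n => mu (i n)) | mu in @Q G].

Definition dimW (N G : groupType) (i : N -> G) : \bar RR :=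
  qdim (QNG i) (sumset (H1NG i) (restrQ i)).

(* the (unique, if i is injective) preimage under i, with default 1 *)
Definition ipre (N G : groupType) (i : N -> G) (x : G) : N :=
  xget 1%g [set n | i n = x].

Definition mu_s (N G Gam : groupType) (i : N -> G) (p : G -> Gam) (s : Gam -> G)
  (mu : C1 N) : C1 G := fun g => mu (ipre i (g * (s (p g))^-1)%g).

(* s^* delta mu_s, a representative of tau_{/b}(mu) in C^2(Gamma) *)
Definition tau_rep (N G Gam : groupType) (i : N -> G) (p : G -> Gam) (s : Gam -> G)
  (mu : C1 N) : C2 Gam := fun g1 g2 => delta1 (mu_s i p s mu) (s g1) (s g2).

(* connecting map d: lift to C^2 and apply delta; d(tau_{/b}(mu)) is the
   class in H^3_b(Gamma) of delta (s^* delta mu_s) *)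
Definition dtau_rep (N G Gam : groupType) (i : N -> G) (p : G -> Gam) (s : Gam -> G)
  (mu : C1 N) : C3 Gam := delta2 (tau_rep i p s mu).

(* dim Im(d o tau_{/b}) inside H^3_b(Gamma) = Z^3_b / delta C^2_b *)
Definition dim_im_dtau (N G Gam : groupType) (i : N -> G) (p : G -> Gam)
  (s : Gam -> G) : \bar RR :=
  qdim [set dtau_rep i p s mu | mu in QNG i] (@Bb3 Gam).

Definition pull2 (G Gam : groupType) (p : G -> Gam) (z : C2 Gam) : C2 G :=
  fun g1 g2 => z (p g1) (p g2).

(* Im c_G^2, Im p^*, Im (p^* o c_Gamma^2) as subspaces of H^2(G), described
   by the sets of cocycles representing their classes *)
Definition im_cG (G : groupType) : set (C2 G) := sumset (@Zb2 G) (@B2 G).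
Definition im_pstar (G Gam : groupType) (p : G -> Gam) : set (C2 G) :=
  sumset [set pull2 p z | z in @Z2 Gam] (@B2 G).
Definition im_pstar_c (G Gam : groupType) (p : G -> Gam) : set (C2 G) :=
  sumset [set pull2 p z | z in @Zb2 Gam] (@B2 G).

Definition dim_second (G Gam : groupType) (p : G -> Gam) : \bar RR :=
  qdim (@im_cG G `&` im_pstar p) (im_pstar_c p).

(* Ker c_Gamma^3 in H^3_b(Gamma): bounded 3-cocycles that are coboundaries of
   (arbitrary) 2-cochains, modulo delta C^2_b *)
Definition dim_ker_c3 (Gam : groupType) : \bar RR := qdim (@Zb3 Gam `&` @B3 Gam) (@Bb3 Gam).

Definition dim_H2 (G : groupType) : \bar RR := qdim (@Z2 G) (@B2 G).

(* Let A = Q(N)^G and U = H^1(N)^G + i^* Q(G), so that W(G,N) = A/U.  The linear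
   map mu |-> delta (s^* delta mu_s) representing d o tau_/b sends U to bounded
   coboundaries, hence dim A/U = dim Im(d o tau_/b) + dim A1/U, where A1 is the
   part of A killed by d o tau_/b.  For mu in A1, tau(mu) is a bounded cochain
   plus a cocycle z on Gamma, and mu |-> [p^* z] is an isomorphism from A1/U onto
   the quotient of Im c_G^2 cap Im p^* by Im(p^* o c_Gamma^2); its inverse
   homogenizes the restriction to N of a primitive of the difference of two
   representatives of a class in Im c_G^2 cap Im p^*.  The inequality follows
   because d o tau_/b lands in Ker c_Gamma^3 and the second quotient is a
   subquotient of H^2(G). *)

From HB Require Import structures.
From mathcomp Require Import all_boot all_order all_algebra.
From mathcomp Require Import boolp classical_sets functions reals constructive_ereal ereal.
From mathcomp Require Import Rstruct.
From mathcomp Require Import ring lra.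

Set Implicit Arguments.
Unset Strict Implicit.
Unset Printing Implicit Defensive.

Import Order.TTheory GRing.Theory Num.Theory.
Local Open Scope ring_scope.
Local Open Scope classical_set_scope.

(** * Subspaces and linear maps *)

Section Subspace.
Variable V : lmodType RR.
Implicit Types (S T : set V) (x y : V).

Definition is_subspace S := S 0 /\ forall (a : RR) x y, S x -> S y -> S (a *: x + y).

Lemma subspace0 S : is_subspace S -> S 0.
Proof. by case. Qed.

Lemma subspaceD S x y : is_subspace S -> S x -> S y -> S (x + y).
Proof. by move=> [_ SC] Sx Sy; have := SC 1 x y Sx Sy; rewrite scale1r. Qed.

Lemma subspaceZ S a x : is_subspace S -> S x -> S (a *: x).
Proof. by move=> [S0 SC] Sx; have := SC a x 0 Sx S0; rewrite addr0. Qed.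

Lemma subspaceB S x y : is_subspace S -> S x -> S y -> S (x - y).
Proof.
by move=> sS Sx Sy; apply: subspaceD => //; rewrite -scaleN1r; apply: subspaceZ.
Qed.

Lemma subspace_sum S k (c : 'I_k -> RR) (v : 'I_k -> V) :
  is_subspace S -> (forall j, S (v j)) -> S (\sum_(j < k) c j *: v j).
Proof.
move=> sS Sv; apply: (big_ind S); first exact: subspace0.
  by move=> x y; apply: subspaceD.
by move=> j _; apply: subspaceZ.
Qed.

Lemma subspaceT : is_subspace [set: V].
Proof. by []. Qed.

Lemma subspaceI S T : is_subspace S -> is_subspace T -> is_subspace (S `&` T).
Proof. by move=> [S0 SC] [T0 TC]; split => // a x y [Sx Tx] [Sy Ty]; split; auto. Qed.

Lemma subspace_sumset S T : is_subspace S -> is_subspace T -> is_subspace (sumset S T).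
Proof.
move=> sS sT; split; first by exists 0, 0; rewrite addr0; do !split; apply: subspace0.
move=> a _ _ [x1 [x2 [Sx1 [Tx2 ->]]]] [y1 [y2 [Sy1 [Ty2 ->]]]].
exists (a *: x1 + y1), (a *: x2 + y2); do !split; [exact: sS.2|exact: sT.2|].
by rewrite scalerDr addrACA.
Qed.

Lemma sumsetl S T x : is_subspace T -> S x -> sumset S T x.
Proof. by move=> sT Sx; exists x, 0; rewrite addr0; do !split => //; apply: subspace0. Qed.

Lemma sumsetr S T x : is_subspace S -> T x -> sumset S T x.
Proof. by move=> sS Tx; exists 0, x; rewrite add0r; do !split => //; apply: subspace0. Qed.

End Subspace.

Section LinearMap.
Variables (V W : lmodType RR) (L : V -> W).
Hypothesis hL : linear L.

Lemma lin0 : L 0 = 0.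
Proof.
have := hL 1 0 0; rewrite scaler0 addr0 scale1r => L0.
by apply: (addrI (L 0)); rewrite addr0 -L0.
Qed.

Lemma linD x y : L (x + y) = L x + L y.
Proof. by have := hL 1 x y; rewrite !scale1r. Qed.

Lemma linZ a x : L (a *: x) = a *: L x.
Proof. by have := hL a x 0; rewrite !addr0 lin0 addr0. Qed.

Lemma linB x y : L (x - y) = L x - L y.
Proof. by rewrite linD -scaleN1r linZ scaleN1r. Qed.

Lemma lin_sum k (c : 'I_k -> RR) (v : 'I_k -> V) :
  L (\sum_(j < k) c j *: v j) = \sum_(j < k) c j *: L (v j).
Proof.
rewrite (big_morph L linD lin0); apply: eq_bigr => j _; exact: linZ.
Qed.

Lemma subspace_image (S : set V) : is_subspace S -> is_subspace (L @` S).
Proof.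
move=> [S0 SC]; split; first by exists 0 => //; rewrite lin0.
by move=> a _ _ [x Sx <-] [y Sy <-]; exists (a *: x + y); [exact: SC|rewrite hL].
Qed.

Lemma subspace_preimage (S : set W) : is_subspace S -> is_subspace (L @^-1` S).
Proof.
move=> [S0 SC]; split; first by rewrite /preimage /= lin0.
by move=> a x y Sx Sy; rewrite /preimage /= hL; apply: SC.
Qed.

Lemma subspace_kernel : is_subspace [set x | L x = 0].
Proof.
split; first exact: lin0.
by move=> a x y /= Lx Ly; rewrite hL Lx Ly scaler0 addr0.
Qed.

End LinearMap.

(** * Dimension of subquotients *)

Definition esup_nat (P : nat -> Prop) : \bar RR := ereal_sup [set k%:R%:E | k in P].

Lemma esup_nat_le (P P' : nat -> Prop) :
  (forall k, P k -> P' k) -> (esup_nat P <= esup_nat P')%E.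
Proof. by move=> PP'; apply: ereal_sup_le => _ [k Pk <-]; exists k; first exact: PP'. Qed.

Lemma esup_nat_ge0 (P : nat -> Prop) : P 0%N -> (0 <= esup_nat P)%E.
Proof. by move=> P0; apply: ereal_sup_ubound; exists 0%N. Qed.

Lemma esup_nat_max (P : nat -> Prop) m :
  P m -> (forall k, P k -> (k <= m)%N) -> esup_nat P = m%:R%:E.
Proof.
move=> Pm ub; apply/eqP; rewrite eq_le; apply/andP; split.
  by apply: ge_ereal_sup => _ [k Pk <-]; rewrite lee_fin ler_nat; exact: ub.
by apply: ereal_sup_ubound; exists m.
Qed.

Lemma esup_nat_unbounded (P : nat -> Prop) :
  (forall m, exists2 k, P k & (m <= k)%N) -> esup_nat P = +oo%E.
Proof.
move=> unb; have : ubound [set k%:R%:E | k in P] (esup_nat P) := @ereal_sup_ubound _ _.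
case: (esup_nat P) => [r| |] ub //.
- exfalso; have [k Pk lek] := unb (Num.Def.archi_bound `|r|).
  have := ub k%:R%:E (ex_intro2 _ _ k Pk erefl); rewrite lee_fin => kr.
  have := archi_boundP (normr_ge0 r).
  have : (Num.Def.archi_bound `|r|)%:R <= k%:R :> RR by rewrite ler_nat.
  have := ler_norm r; lra.
- by have [k Pk _] := unb 0%N; have := ub k%:R%:E (ex_intro2 _ _ k Pk erefl).
Qed.

Lemma nat_bounded_or_unbounded (P : nat -> Prop) : P 0%N ->
  (exists m, P m /\ forall k, P k -> (k <= m)%N) \/
  (forall m, exists2 k, P k & (m <= k)%N).
Proof.
move=> P0; have [|/existsNP[m0 hm0]] := pselect (forall m, exists2 k, P k & (m <= k)%N).
  by right.
left; have bnd k : `[< P k >] -> (k <= m0)%N.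
  by move=> /asboolP Pk; rewrite leqNgt; apply/negP => /ltnW lt; apply: hm0; exists k.
have ex : exists k, `[< P k >] by exists 0%N; apply/asboolP.
exists (ex_maxn ex bnd); case: ex_maxnP => m /asboolP Pm mmax; split => // k Pk.
by apply: mmax; apply/asboolP.
Qed.

Lemma esup_natD (P P' R : nat -> Prop) : P 0%N -> P' 0%N ->
  (forall a b, P a -> P' b -> R (a + b)%N) ->
  (forall k, R k -> exists a b, [/\ P a, P' b & (k <= a + b)%N]) ->
  esup_nat R = (esup_nat P + esup_nat P')%E.
Proof.
move=> P0 P'0 PR RP.
have [[m [Pm ubm]]|unb] := nat_bounded_or_unbounded P0; last first.
  rewrite (esup_nat_unbounded unb) addye; last first.
    by apply/negP => /eqP e; have := esup_nat_ge0 P'0; rewrite e.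
  apply: esup_nat_unbounded => m; have [k Pk lek] := unb m.
  by exists (k + 0)%N; [exact: PR|rewrite addn0].
have [[m' [Pm' ubm']]|unb'] := nat_bounded_or_unbounded P'0; last first.
  rewrite (esup_nat_unbounded unb') addey; last by rewrite (esup_nat_max Pm ubm).
  by apply: esup_nat_unbounded => m0; have [k Pk lek] := unb' m0; exists (0 + k)%N; first exact: PR.
rewrite (esup_nat_max Pm ubm) (esup_nat_max Pm' ubm') -EFinD -natrD.
apply: esup_nat_max; first exact: PR.
by move=> k /RP [a [b [Pa Pb kab]]]; rewrite (leq_trans kab) // leq_add ?ubm ?ubm'.
Qed.

Section QuotientDimension.
Variable V : lmodType RR.
Implicit Types (A B : set V).

Lemma qdimE A B : qdim A B = esup_nat (qdim_ge A B).
Proof. by []. Qed.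

Lemma qdim_ge0 A B : qdim_ge A B 0.
Proof. by exists (fun _ => 0); split => [[]|c _ []]. Qed.

Lemma qdim_le A B A' B' : A `<=` A' -> B' `<=` B -> (qdim A B <= qdim A' B')%E.
Proof.
move=> AA' B'B; apply: esup_nat_le => k [v [Av indep]].
by exists v; split => [j|c /B'B]; [exact: AA'|exact: indep].
Qed.

End QuotientDimension.

Section LinearRelation.
Variables (V W : lmodType RR) (Rl : set (V * W)).
Hypothesis sRl : is_subspace Rl.

Lemma relation_sum k (c : 'I_k -> RR) (v : 'I_k -> V) (w : 'I_k -> W) :
  (forall j, Rl (v j, w j)) ->
  Rl (\sum_(j < k) c j *: v j, \sum_(j < k) c j *: w j).
Proof.
move=> Rvw; apply: (big_ind2 (fun x y => Rl (x, y))); first exact (subspace0 sRl).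
  by move=> x1 x2 y1 y2 R1 R2; exact: (subspaceD sRl R1 R2).
by move=> j _; have := subspaceZ (c j) sRl (Rvw j).
Qed.

Lemma qdim_ge_transfer (A B : set V) (A' B' : set W) :
  (forall a, A a -> exists2 w, A' w & Rl (a, w)) ->
  (forall a w, Rl (a, w) -> B' w -> B a) ->
  forall k, qdim_ge A B k -> qdim_ge A' B' k.
Proof.
move=> tot refl k [v [Av indep]].
have /choice [w Aw] : forall j, exists w, A' w /\ Rl (v j, w).
  by move=> j; have [w ? ?] := tot _ (Av j); exists w.
exists w; split => [j|c B'c]; first by case: (Aw j).
by apply: indep; apply: (refl _ _ _ B'c); apply: relation_sum => j; case: (Aw j).
Qed.

End LinearRelation.

Lemma qdim_transfer (V W : lmodType RR) (Rl : set (V * W))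
    (A B : set V) (A' B' : set W) :
  is_subspace Rl ->
  (forall a, A a -> exists2 w, A' w & Rl (a, w)) ->
  (forall w, A' w -> exists2 a, A a & Rl (a, w)) ->
  (forall a w, Rl (a, w) -> B a <-> B' w) ->
  qdim A B = qdim A' B'.
Proof.
move=> sRl tot tot' BB'; apply/eqP; rewrite eq_le !qdimE; apply/andP; split.
  by apply: esup_nat_le; apply: (qdim_ge_transfer sRl tot) => a w /BB' [].
have sRl' : is_subspace [set wv : W * V | Rl (wv.2, wv.1)].
  by case: sRl => R0 RC; split => // a x y; apply: RC.
by apply: esup_nat_le; apply: (qdim_ge_transfer sRl') => // w a /BB' [].
Qed.

Section AddLine.
Variables (V : lmodType RR) (U : set V) (u : V).
Hypothesis sU : is_subspace U.

Definition addline : set V := [set x | exists t, U (x - t *: u)].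

Lemma subspace_addline : is_subspace addline.
Proof.
split; first by exists 0; rewrite scale0r subr0; exact: subspace0.
move=> a x y [t1 Ux] [t2 Uy]; exists (a * t1 + t2).
have -> : a *: x + y - (a * t1 + t2) *: u = a *: (x - t1 *: u) + (y - t2 *: u).
  by rewrite scalerDl scalerBr scalerA opprD addrACA.
exact: sU.2.
Qed.

Lemma addline_sub (S : set V) : is_subspace S -> U `<=` S -> S u -> addline `<=` S.
Proof.
move=> sS US Su x [t Uxu]; rewrite -(subrK (t *: u) x).
by apply: subspaceD => //; [exact: US|exact: subspaceZ].
Qed.

Lemma qdim_ge_addline (A : set V) n (w : 'I_n.+1 -> V) (c : 'I_n.+1 -> RR) j0 :
  (forall j, A (w j)) ->
  (forall d : 'I_n.+1 -> RR, U (\sum_(j < n.+1) d j *: w j) -> forall j, d j = 0) ->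
  u = \sum_(j < n.+1) c j *: w j -> c j0 != 0 ->
  qdim_ge A addline n.
Proof.
move=> Aw indep eu cj0; exists (fun k => w (lift j0 k)); split => [k|d [t]].
  exact: Aw.
rewrite eu => Ut.
pose d' j := if unlift j0 j is Some k then d k else 0.
pose e j := d' j - t * c j.
have eE : \sum_(j < n.+1) e j *: w j =
    \sum_(j < n.+1) d' j *: w j - t *: \sum_(j < n.+1) c j *: w j.
  rewrite scaler_sumr -sumrB; apply: eq_bigr => j _.
  by rewrite scalerBl scalerA.
have d'E : \sum_(j < n.+1) d' j *: w j = \sum_(k < n) d k *: w (lift j0 k).
  rewrite (bigD1_ord j0) //= /d' unlift_none scale0r add0r.
  by apply: eq_bigr => k _; rewrite liftK.
have e0 : forall j, e j = 0 by apply: indep; rewrite eE d'E.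
have t0 : t = 0.
  move: (e0 j0) cj0; rewrite /e /d' unlift_none sub0r => /eqP; rewrite oppr_eq0 mulf_eq0.
  by case/orP => /eqP // ->; rewrite eqxx.
by move=> k; have := e0 (lift j0 k); rewrite /e /d' liftK t0 mul0r subr0.
Qed.

Lemma qdim_ge_addlineS (S : set V) b :
  S u -> ~ U u -> qdim_ge S addline b -> qdim_ge S U b.+1.
Proof.
move=> Su nUu [y [Sy indep]].
pose y' j := if unlift ord_max j is Some k then y k else u.
exists y'; split => [j|e Ue].
  by rewrite /y'; case: unlift.
have sumE : \sum_(j < b.+1) e j *: y' j =
    e ord_max *: u + \sum_(k < b) e (lift ord_max k) *: y k.
  rewrite (bigD1_ord ord_max) //= /y' unlift_none; congr (_ + _).
  by apply: eq_bigr => k _; rewrite liftK.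
have elift : forall k, e (lift ord_max k) = 0.
  by apply: indep; exists (- e ord_max); rewrite scaleNr opprK addrC -sumE.
have emax : e ord_max = 0.
  have [//|enz] := eqVneq (e ord_max) 0; exfalso; apply: nUu.
  move: Ue; rewrite sumE big1 ?addr0; last by move=> k _; rewrite elift scale0r.
  by move/(subspaceZ (e ord_max)^-1 sU); rewrite scalerA mulVf // scale1r.
by move=> j; case: (unliftP ord_max j) => [k ->|->].
Qed.

End AddLine.

Section SubquotientAdditivity.
Variables (V Y : lmodType RR) (L : V -> Y) (A U : set V) (C : set Y).
Hypotheses (hL : linear L) (sA : is_subspace A) (sC : is_subspace C) (sU : is_subspace U).
Let A1 := A `&` (L @^-1` C).
Hypothesis UA1 : U `<=` A1.

Lemma subspace_A1 : is_subspace A1.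
Proof. by apply: subspaceI => //; apply: subspace_preimage. Qed.

Lemma qdim_ge_add a b :
  qdim_ge (L @` A) C a -> qdim_ge A1 U b -> qdim_ge A U (a + b).
Proof.
move=> [x [Ax indx]] [y [Ay indy]].
have /choice [v Av] : forall j, exists v, A v /\ L v = x j.
  by move=> j; case: (Ax j) => v ? <-; exists v.
pose w j := match fintype.split j with inl j1 => v j1 | inr j2 => y j2 end.
have wl k : w (lshift b k) = v k by rewrite /w -[lshift b k]/(unsplit (inl _ k)) unsplitK.
have wr k : w (rshift a k) = y k by rewrite /w -[rshift a k]/(unsplit (inr _ k)) unsplitK.
exists w; split => [j|c Uc].
  by rewrite /w; case: fintype.split => j1; [case: (Av j1)|case: (Ay j1)].
have sumE : \sum_(j < a + b) c j *: w j =
    \sum_(k < a) c (lshift b k) *: v k + \sum_(k < b) c (rshift a k) *: y k.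
  by rewrite big_split_ord; congr (_ + _); apply: eq_bigr => k _; rewrite ?wl ?wr.
have cl : forall k, c (lshift b k) = 0.
  apply: indx; have -> : \sum_(k < a) c (lshift b k) *: x k =
      L (\sum_(j < a + b) c j *: w j) - L (\sum_(k < b) c (rshift a k) *: y k).
    rewrite sumE linD // addrK lin_sum //; apply: eq_bigr => k _.
    by case: (Av k) => _ ->.
  apply: subspaceB => //; first exact: (UA1 Uc).2.
  by rewrite lin_sum //; apply: subspace_sum => // k; case: (Ay k).
have cr : forall k, c (rshift a k) = 0.
  by apply: indy; move: Uc; rewrite sumE big1 ?add0r // => k _; rewrite cl scale0r.
move=> j; case: (splitP j) => k jk.
  by rewrite (_ : j = lshift b k) ?cl //; apply: val_inj.
by rewrite (_ : j = rshift a k) ?cr //; apply: val_inj.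
Qed.

Lemma qdim_ge_split n (U' : set V) : is_subspace U' -> U' `<=` A1 ->
  qdim_ge A U' n -> exists a b, [/\ qdim_ge (L @` A) C a, qdim_ge A1 U' b & (n <= a + b)%N].
Proof.
elim: n U' => [|n IH] U' sU' U'A1 [w [Aw indep]].
  by exists 0%N, 0%N; split => //; apply: qdim_ge0.
have [indL|] := pselect (forall c : 'I_n.+1 -> RR,
  C (L (\sum_(j < n.+1) c j *: w j)) -> forall j, c j = 0).
  exists n.+1, 0%N; split; [|exact: qdim_ge0|by rewrite addn0].
  exists (fun j => L (w j)); split => [j|c]; first by exists (w j).
  by rewrite -lin_sum //; exact: indL.
move=> /existsNP [c /not_implyP [Cc /existsNP [j0 /eqP cj0]]].
pose u := \sum_(j < n.+1) c j *: w j.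
have A1u : A1 u by split; [exact: subspace_sum|].
have nU'u : ~ U' u by move=> U'u; move/eqP: cj0; apply; exact: indep.
have [a [b [ha hb nab]]] := IH (addline U' u) (subspace_addline u sU')
  (addline_sub subspace_A1 U'A1 A1u) (qdim_ge_addline Aw indep erefl cj0).
exists a, b.+1; split => //; first exact: qdim_ge_addlineS hb.
by rewrite addnS ltnS.
Qed.

Lemma qdim_add : qdim A U = (qdim (L @` A) C + qdim A1 U)%E.
Proof.
rewrite !qdimE; apply: esup_natD; try exact: qdim_ge0.
  exact: qdim_ge_add.
by move=> k /(qdim_ge_split sU UA1) [a [b [? ? ?]]]; exists a, b.
Qed.

End SubquotientAdditivity.

(** * Real estimates *)

Lemma normr_bounds (x : RR) : - `|x| <= x /\ x <= `|x|.
Proof. by split; [exact: lerNnormlW|exact: ler_norm]. Qed.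

Lemma nat_bounded_eq0 (a K : RR) : (forall n : nat, n%:R * `|a| <= K) -> a = 0.
Proof.
move=> h; have [//|anz] := eqVneq a 0.
have pa : 0 < `|a| by rewrite normr_gt0.
have K0 : 0 <= K by have := h 0%N; rewrite mul0r.
have := archi_boundP (divr_ge0 K0 (ltW pa)); rewrite ltr_pdivrMr // => hK.
by have := h (Num.Def.archi_bound (K / `|a|)); lra.
Qed.

Lemma natS_bounded_eq0 (a K : RR) : (forall n : nat, n.+1%:R * `|a| <= K) -> a = 0.
Proof.
move=> h; apply: (@nat_bounded_eq0 _ K) => n; apply: le_trans (h n).
by rewrite ler_wpM2r ?normr_ge0 ?ler_nat.
Qed.

(* A common real [v] with [|n.+1 v - x n| <= K] exists as soon as the
   intervals [[(x n - K) / n.+1, (x n + K) / n.+1]] pairwise intersect: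
   take the sup of their left ends. *)
Lemma sup_pick (x : nat -> RR) (K : RR) :
  (forall m n, (x m - K) * n.+1%:R <= (x n + K) * m.+1%:R) ->
  exists v, forall n, `|n.+1%:R * v - x n| <= K.
Proof.
move=> h; pose E := [set (x m - K) / m.+1%:R | m in [set: nat]].
exists (sup E) => n.
have pn : 0 < n.+1%:R :> RR by rewrite ltr0n.
have ubE y : E y -> y <= (x n + K) / n.+1%:R.
  case=> m _ <-; rewrite ler_pdivlMr ?ltr0n // mulrAC ler_pdivrMr //; exact: h.
have le1 : sup E <= (x n + K) / n.+1%:R.
  by apply: ge_sup => //; exists ((x 0%N - K) / 1%:R), 0%N.
have le2 : (x n - K) / n.+1%:R <= sup E.
  by apply: ub_le_sup; [exists ((x n + K) / n.+1%:R)|exists n].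
move: le1 le2; rewrite ler_pdivlMr // ler_pdivrMr // => le1 le2.
rewrite ler_norml; apply/andP; split; nra.
Qed.

Lemma norm_scale_addr_le (a x y Mx My : RR) :
  `|x| <= Mx -> `|y| <= My -> `|a * x + y| <= `|a| * Mx + My.
Proof.
move=> hx hy; rewrite (le_trans (ler_normD _ _)) // lerD // normrM.
by rewrite ler_wpM2l.
Qed.

(** * Cochains *)

Lemma scaleoE (a x : RR) : a *: (x : RR^o) = a * x.
Proof. by []. Qed.

Lemma zerofE (T : Type) (V : nmodType) (x : T) : (0 : T -> V) x = 0.
Proof. by []. Qed.

Definition cochainE := (fctE, scaleoE, zerofE).

Section Cochains.
Variable H : groupType.

Lemma delta1_linear : linear (@delta1 H).
Proof. by move=> a f g; do 2!apply/funext => ?; rewrite /delta1 !cochainE /=; ring. Qed.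

Lemma delta2_linear : linear (@delta2 H).
Proof. by move=> a f g; do 3!apply/funext => ?; rewrite /delta2 !cochainE /=; ring. Qed.

Lemma delta2_delta1 (f : C1 H) : delta2 (delta1 f) = 0.
Proof. by do 3!apply/funext => ?; rewrite /delta2 /delta1 !cochainE !mulgA; ring. Qed.

Lemma delta3_delta2 (f : C2 H) : delta3 (delta2 f) = 0.
Proof. by do 4!apply/funext => ?; rewrite /delta3 /delta2 !cochainE !mulgA; ring. Qed.

Lemma subspace_bounded2 : is_subspace (@bounded2 H).
Proof.
split; first by exists 0 => h h'; rewrite normr0.
move=> a x y [Mx hx] [My hy]; exists (`|a| * Mx + My) => h h'.
by rewrite !cochainE; apply: norm_scale_addr_le.
Qed.

Lemma subspace_Z2 : is_subspace (@Z2 H).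
Proof. exact (subspace_kernel delta2_linear). Qed.

Lemma subspace_B2 : is_subspace (@B2 H).
Proof. exact: (subspace_image delta1_linear (@subspaceT _)). Qed.

Lemma subspace_Zb2 : is_subspace (@Zb2 H).
Proof. exact: (subspaceI subspace_bounded2 subspace_Z2). Qed.

Lemma subspace_Bb3 : is_subspace (@Bb3 H).
Proof. exact: (subspace_image delta2_linear subspace_bounded2). Qed.

End Cochains.

Section Pullback.
Variables (G Gam : groupType) (p : G -> Gam).

Lemma pull2_linear : linear (pull2 p).
Proof. by move=> a f g; do 2!apply/funext => ?; rewrite /pull2 !cochainE. Qed.

Hypothesis hp : group_hom p.

Lemma delta2_pull2 (z : C2 Gam) g1 g2 g3 :
  delta2 (pull2 p z) g1 g2 g3 = delta2 z (p g1) (p g2) (p g3).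
Proof. by rewrite /delta2 /pull2 !hp. Qed.

Lemma pull2_delta1 (h : C1 Gam) : pull2 p (delta1 h) = delta1 (fun g => h (p g)).
Proof. by do 2!apply/funext => ?; rewrite /pull2 /delta1 hp. Qed.

Lemma subspace_im_pstar_c : is_subspace (im_pstar_c p).
Proof.
apply: subspace_sumset; last exact: subspace_B2.
exact: (subspace_image pull2_linear (@subspace_Zb2 Gam)).
Qed.

End Pullback.

(** * Quasimorphisms and homogenization *)

Section GroupHom.
Variables (H K : groupType) (f : H -> K).
Hypothesis hf : group_hom f.

Lemma group_hom1 : f 1%g = 1%g.
Proof. by apply: (mulgI (f 1%g)); rewrite -hf !mulg1. Qed.

Lemma group_homV x : f x^-1%g = (f x)^-1%g.
Proof. by apply/esym/mulg1_eq; rewrite -hf mulgV group_hom1. Qed.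

Lemma group_homX x n : f (x ^+ n)%g = (f x ^+ n)%g.
Proof. by elim: n => [|n IH]; rewrite ?group_hom1 // !expgS hf IH. Qed.

End GroupHom.

Lemma conjgXn (H : groupType) (g x : H) n : ((g * x * g^-1) ^+ n = g * x ^+ n * g^-1)%g.
Proof.
elim: n => [|n IH]; first by rewrite !expg0 mulg1 mulgV.
by rewrite expgS IH expgS !mulgA mulgVK.
Qed.

Section Quasimorphisms.
Variable H : groupType.
Implicit Types f : C1 H.

Lemma qm_defect f M (hM : forall a b, `|delta1 f a b| <= M) a b :
  `|f (a * b)%g - f a - f b| <= M.
Proof.
have -> : f (a * b)%g - f a - f b = - delta1 f a b by rewrite /delta1; ring.
by rewrite normrN.
Qed.

Lemma homogeneous1 f : homogeneous f -> f 1%g = 0.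
Proof. by move=> hf; have := hf 1%g 0%N; rewrite expg0 mul0r. Qed.

Lemma homogeneous_bounded_eq0 f :
  homogeneous f -> (exists K, forall x, `|f x| <= K) -> forall x, f x = 0.
Proof.
move=> hf [K hK] x; apply: (@nat_bounded_eq0 _ K) => n.
by have := hK (x ^+ n)%g; rewrite hf normrM ger0_norm ?ler0n.
Qed.

Lemma QV f : Q f -> forall h, f h^-1%g = - f h.
Proof.
move=> [[M hM] hf] h; apply/eqP; rewrite -addr_eq0; apply/eqP.
apply: (@nat_bounded_eq0 _ M) => n.
have := hM (h ^+ n)%g (h ^+ n)^-1%g.
rewrite /delta1 mulgV homogeneous1 // -expVgn !hf.
rewrite (_ : _ - 0 + _ = n%:R * (f h^-1%g + f h)); last by ring.
by rewrite normrM ger0_norm ?ler0n.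
Qed.

Lemma Q_conj f : Q f -> forall g x, f (g * x * g^-1)%g = f x.
Proof.
move=> Qf g x; have [[M hM] hf] := Qf; apply/eqP; rewrite -subr_eq0; apply/eqP.
apply: (@nat_bounded_eq0 _ (M + M)) => n.
have e1 := qm_defect hM (g * x ^+ n)%g g^-1%g.
have e2 := qm_defect hM g (x ^+ n)%g.
rewrite QV // -conjgXn hf in e1; rewrite hf in e2.
rewrite -[n%:R]ger0_norm ?ler0n // -normrM mulrBr.
move: e1 e2; rewrite !ler_norml => /andP[? ?] /andP[? ?]; apply/andP; split; lra.
Qed.

Lemma subspace_homogeneous : is_subspace (@homogeneous H).
Proof.
split; first by move=> h n; rewrite !cochainE mulr0.
by move=> a x y hx hy h n; rewrite !cochainE hx hy; ring.
Qed.

Lemma subspace_Q : is_subspace (@Q H).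
Proof.
have -> : @Q H = delta1 (H:=H) @^-1` @bounded2 H `&` @homogeneous H by [].
exact: subspaceI (subspace_preimage (@delta1_linear H) (@subspace_bounded2 H))
  subspace_homogeneous.
Qed.

Lemma subspace_Hom1 : is_subspace (@Hom1 H).
Proof.
split; first by move=> x y; rewrite !cochainE addr0.
by move=> a f g hf hg x y; rewrite !cochainE hf hg; ring.
Qed.

Lemma Hom1_homogeneous f : Hom1 f -> homogeneous f.
Proof.
move=> hf h; elim => [|n IH].
  by have := hf 1%g 1%g; rewrite mulg1 expg0 mul0r; lra.
by rewrite expgS hf IH -addn1 natrD; ring.
Qed.

Lemma Hom1_Q f : Hom1 f -> Q f.
Proof.
move=> hf; split; last exact: Hom1_homogeneous.
by exists 0 => a b; rewrite /delta1 hf (_ : _ + _ = 0) ?normr0 //; ring.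
Qed.

End Quasimorphisms.

Section Homogenization.
Variables (H : groupType) (phi : C1 H) (M : RR).
Hypothesis phiM : forall a b, `|delta1 phi a b| <= M.

Lemma qm_pow_defect h m n :
  `|phi (h ^+ (m * n))%g - n%:R * phi (h ^+ m)%g| <= n.+1%:R * M.
Proof.
elim: n => [|n IH].
  rewrite muln0 expg0 mul0r subr0 mul1r.
  by have := qm_defect phiM 1%g 1%g; rewrite mulg1 (_ : _ - _ - _ = - phi 1%g) ?normrN //; ring.
rewrite mulnS expgnDr; have := qm_defect phiM (h ^+ m)%g (h ^+ (m * n))%g; move: IH.
set x := phi (h ^+ m)%g; set y := phi (h ^+ (m * n))%g; set z := phi _.
rewrite !ler_norml -[n.+2]addn1 -[n.+1]addn1 !natrD => /andP[? ?] /andP[? ?].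
apply/andP; split; nra.
Qed.

(* [nu h] is the homogenization [lim phi (h ^ n) / n], obtained without limits. *)
Lemma homogenization_exists :
  exists nu : C1 H, forall h n, `|n.+1%:R * nu h - phi (h ^+ n.+1)%g| <= M + M.
Proof.
suff /choice[nu nuE] : forall h, exists v : RR,
    forall n, `|n.+1%:R * v - phi (h ^+ n.+1)%g| <= M + M by exists nu.
move=> h; apply: sup_pick => m n.
have Fmn := qm_pow_defect h m.+1 n.+1; have Fnm := qm_pow_defect h n.+1 m.+1.
rewrite mulnC in Fnm; move: Fmn Fnm.
set P := phi (h ^+ (_ * _))%g; set Pm := phi (h ^+ m.+1)%g; set Pn := phi (h ^+ n.+1)%g.
rewrite !ler_norml -[n.+2]addn1 -[m.+2]addn1 -[n.+1]addn1 -[m.+1]addn1 !natrD.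
have : 0 <= m%:R :> RR by rewrite ler0n.
have : 0 <= n%:R :> RR by rewrite ler0n.
move=> ? ? /andP[? ?] /andP[? ?]; nra.
Qed.

Variable nu : C1 H.
Hypothesis nuE : forall h n, `|n.+1%:R * nu h - phi (h ^+ n.+1)%g| <= M + M.

Lemma homogenization_close h : `|nu h - phi h| <= M + M.
Proof. by have := nuE h 0%N; rewrite mul1r expg1. Qed.

Lemma homogenization_homogeneous : homogeneous nu.
Proof.
move=> h [|k].
  rewrite expg0 mul0r; apply: (@natS_bounded_eq0 _ (M + M + M)) => n.
  have e1 := nuE 1%g n; rewrite expg1n in e1.
  have e2 := qm_defect phiM 1%g 1%g; rewrite mulg1 in e2.
  rewrite -[n.+1%:R]ger0_norm ?ler0n // -normrM.
  move: e1 e2; set P := phi 1%g; rewrite !ler_norml => /andP[? ?] /andP[? ?].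
  apply/andP; split; nra.
apply/eqP; rewrite -subr_eq0; apply/eqP.
apply: (@natS_bounded_eq0 _ ((M + M) + (M + M))) => n.
have e1 := nuE (h ^+ k.+1)%g n; rewrite -expgnA in e1.
have e2 := nuE h (k.+1 * n.+1).-1; rewrite prednK ?muln_gt0 // natrM in e2.
rewrite -[n.+1%:R]ger0_norm ?ler0n // -normrM.
move: e1 e2; set P := phi _; set a := nu _; set b := nu h.
set kk := k.+1%:R; set nn := n.+1%:R.
rewrite (_ : kk * nn * b = nn * (kk * b)); last by ring.
rewrite !ler_norml => /andP[? ?] /andP[? ?]; apply/andP; split; nra.
Qed.

Lemma homogenization_Q : Q nu.
Proof.
split; last exact: homogenization_homogeneous.
exists (M + (M + M) + (M + M) + (M + M)) => a b.
have := phiM a b; have := homogenization_close a; have := homogenization_close b.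
have := homogenization_close (a * b)%g; rewrite /delta1.
set x1 := nu (a * b)%g; set x2 := nu a; set x3 := nu b.
rewrite !ler_norml => /andP[? ?] /andP[? ?] /andP[? ?] /andP[? ?].
apply/andP; split; lra.
Qed.

End Homogenization.

Lemma homogenize (H : groupType) (phi : C1 H) M :
  (forall a b, `|delta1 phi a b| <= M) ->
  exists2 nu, Q nu & forall h, `|nu h - phi h| <= M + M.
Proof.
move=> phiM; have [nu nuE] := homogenization_exists phiM.
by exists nu; [exact: homogenization_Q nuE|exact: homogenization_close nuE].
Qed.

(** * The extension *)

Section Extension.
Variables (N G Gam : groupType) (i : N -> G) (p : G -> Gam) (s : Gam -> G).
Hypotheses (hse : short_exact i p) (ps : forall gam, p (s gam) = gam) (s1 : s 1%g = 1%g).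

Let hi : group_hom i. Proof. by case: hse. Qed.
Let hp : group_hom p. Proof. by case: hse. Qed.
Let i_inj : injective i. Proof. by case: hse. Qed.
Let kerP g : p g = 1%g <-> exists n, i n = g. Proof. by case: hse. Qed.

Lemma p_i n : p (i n) = 1%g.
Proof. by apply/kerP; exists n. Qed.

Lemma i_ipre x : p x = 1%g -> i (ipre i x) = x.
Proof. by move=> /kerP ex; have := @xgetPex _ 1%g [set n | i n = x] ex. Qed.

Lemma ipre_i n : ipre i (i n) = n.
Proof. by apply: i_inj; rewrite i_ipre // p_i. Qed.

Lemma p_mulsV g : p (g * (s (p g))^-1)%g = 1%g.
Proof. by rewrite hp (group_homV hp) ps mulgV. Qed.

Definition ext_cocycle (g1 g2 : Gam) : N :=
  ipre i (s g1 * s g2 * (s (g1 * g2)%g)^-1)%g.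

Lemma i_ext_cocycle g1 g2 :
  i (ext_cocycle g1 g2) = (s g1 * s g2 * (s (g1 * g2)%g)^-1)%g.
Proof. by apply: i_ipre; rewrite !hp (group_homV hp) !ps mulgV. Qed.

Lemma mu_s_i (mu : C1 N) n : mu_s i p s mu (i n) = mu n.
Proof. by rewrite /mu_s p_i s1 invg1 mulg1 ipre_i. Qed.

Lemma mu_s_s (mu : C1 N) gam : mu_s i p s mu (s gam) = mu 1%g.
Proof. by rewrite /mu_s ps mulgV -(group_hom1 hi) ipre_i. Qed.

Lemma tau_repE (mu : C1 N) g1 g2 :
  tau_rep i p s mu g1 g2 = mu 1%g + mu 1%g - mu (ext_cocycle g1 g2).
Proof. by rewrite /tau_rep /delta1 !mu_s_s /mu_s hp !ps; ring. Qed.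

Lemma tau_rep_linear : linear (tau_rep i p s).
Proof.
by move=> a mu nu; do 2!apply/funext => ?; rewrite /tau_rep /delta1 /mu_s !cochainE; ring.
Qed.

Lemma dtau_rep_linear : linear (dtau_rep i p s).
Proof. by move=> a mu nu; rewrite /dtau_rep tau_rep_linear delta2_linear. Qed.

(* With [g1 = i a * s (p g1)] and [g2 = i n2 * s (p g2)], the element
   [g1 g2 s (p (g1 g2))^-1] of [i N] is [a], times [n2] conjugated by
   [s (p g1)], times [ext_cocycle]. *)
Lemma delta1_mu_s_pull2 g1 g2 : exists a b c : N, forall mu : C1 N, G_invariant i mu ->
  delta1 (mu_s i p s mu) g1 g2 - tau_rep i p s mu (p g1) (p g2) =
  mu a + mu b + mu c - mu (a * b * c)%g - mu 1%g - mu 1%g.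
Proof.
pose s1' := s (p g1); pose s2' := s (p g2).
pose a := ipre i (g1 * s1'^-1)%g; pose n2 := ipre i (g2 * s2'^-1)%g.
have ia : i a = (g1 * s1'^-1)%g by apply: i_ipre; exact: p_mulsV.
have in2 : i n2 = (g2 * s2'^-1)%g by apply: i_ipre; exact: p_mulsV.
pose b := ipre i (s1' * i n2 * s1'^-1)%g.
have ib : i b = (s1' * i n2 * s1'^-1)%g.
  by apply: i_ipre; rewrite !hp (group_homV hp) p_i mulg1 mulgV.
exists a, b, (ext_cocycle (p g1) (p g2)) => mu Gmu.
have mub : mu b = mu n2 by apply: (Gmu s1').
have e : ipre i (g1 * g2 * (s (p (g1 * g2)%g))^-1)%g = (a * b * ext_cocycle (p g1) (p g2))%g.
  apply: i_inj; rewrite i_ipre ?p_mulsV // !hi ia ib in2 i_ext_cocycle hp -/s1' -/s2'.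
  by rewrite !mulgA !mulgVK.
by rewrite tau_repE /delta1 /mu_s -/s1' -/s2' e -/a -/n2 mub; ring.
Qed.

Lemma delta1_mu_s_pull2_bounded (mu : C1 N) : QNG i mu -> exists K, forall g1 g2,
  `|delta1 (mu_s i p s mu) g1 g2 - tau_rep i p s mu (p g1) (p g2)| <= K.
Proof.
move=> [[[M hM] hom] Gmu]; exists (M + M) => g1 g2.
have [a [b [c ->]]] := delta1_mu_s_pull2 g1 g2; rewrite // homogeneous1 //.
have e1 := qm_defect hM (a * b)%g c; have e2 := qm_defect hM a b.
move: e1 e2; set x := mu (a * b * c)%g; set y := mu (a * b)%g.
rewrite !ler_norml => /andP[? ?] /andP[? ?]; apply/andP; split; lra.
Qed.

Lemma pull2_tau_rep_Hom1 (h : C1 N) : H1NG i h ->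
  pull2 p (tau_rep i p s h) = delta1 (mu_s i p s h).
Proof.
move=> [hh Gh]; apply/funext => g1; apply/funext => g2; rewrite /pull2.
have [a [b [c /(_ h Gh)]]] := delta1_mu_s_pull2 g1 g2.
rewrite !hh homogeneous1; last exact: Hom1_homogeneous.
by move=> e; apply/eqP; rewrite eq_sym -subr_eq0 e; apply/eqP; ring.
Qed.

Lemma delta2_tau_rep_Hom1 (h : C1 N) : H1NG i h -> delta2 (tau_rep i p s h) = 0.
Proof.
move=> hh; do 3!apply/funext => ?; rewrite /= -[X in delta2 _ X]ps -[X in delta2 _ _ X]ps.
by rewrite -[X in delta2 _ _ _ X]ps -delta2_pull2 // pull2_tau_rep_Hom1 // delta2_delta1.
Qed.

Lemma subspace_G_invariant : is_subspace (G_invariant i).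
Proof.
split=> [g n n' _|a x y hx hy g n n' e]; first by [].
by rewrite !cochainE (hx g n n' e) (hy g n n' e).
Qed.

Lemma subspace_QNG : is_subspace (QNG i).
Proof. exact: subspaceI (@subspace_Q N) subspace_G_invariant. Qed.

Lemma H1NG_QNG : H1NG i `<=` QNG i.
Proof. by move=> h [hh Gh]; split => //; exact: Hom1_Q. Qed.

Definition restr (nu : C1 G) : C1 N := fun n => nu (i n).

Lemma restr_linear : linear restr.
Proof. by move=> a x y; apply/funext => n; rewrite /restr !cochainE. Qed.

Lemma restr_QNG (nu : C1 G) : Q nu -> QNG i (restr nu).
Proof.
move=> Qnu; have [[M hM] hom] := Qnu; split; last first.
  by move=> g n n' e; rewrite /restr e Q_conj.
split=> [|h n]; last by rewrite /restr (group_homX hi) hom.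
by exists M => a b; rewrite /delta1 /restr !hi; apply: hM.
Qed.

Let U := sumset (H1NG i) (restrQ i).

Lemma subspace_U : is_subspace U.
Proof.
apply: subspace_sumset; first exact: subspaceI (@subspace_Hom1 N) subspace_G_invariant.
exact: (subspace_image restr_linear (@subspace_Q G)).
Qed.

Lemma U_of_close (mu h : C1 N) (nu : C1 G) : QNG i mu -> Hom1 h -> Q nu ->
  (exists K, forall n, `|mu n - (h n + nu (i n))| <= K) -> U mu.
Proof.
move=> Qmu hh Qnu muK.
have muE n : mu n = h n + restr nu n.
  apply/eqP; rewrite -subr_eq0; apply/eqP; move: n.
  apply: (@homogeneous_bounded_eq0 N (fun n => mu n - (h n + restr nu n))) => //.
  apply: (subspaceB (@subspace_homogeneous N)); first exact: Qmu.1.2.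
  exact: (subspaceD (@subspace_homogeneous N)) (Hom1_homogeneous hh) (restr_QNG Qnu).1.2.
exists h, (restr nu); split; last by split; [exists nu|apply/funext => n; rewrite muE].
split => // g n n' e; have hE m : h m = mu m - nu (i m) by rewrite muE /restr addrK.
by rewrite !hE (Qmu.2 g n n' e) e Q_conj.
Qed.

Lemma tau_rep_restr (nu : C1 G) : Q nu -> exists2 b, bounded2 b &
  tau_rep i p s (restr nu) = b - delta1 (fun gam => nu (s gam)).
Proof.
move=> Qnu; have [[M hM] hom] := Qnu.
exists (tau_rep i p s (restr nu) + delta1 (fun gam => nu (s gam))); last by rewrite addrK.
exists (M + M) => x y; rewrite !cochainE tau_repE /restr i_ext_cocycle (group_hom1 hi).
rewrite homogeneous1 // /delta1.
have e1 := qm_defect hM (s x * s y)%g (s (x * y)%g)^-1%g.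
have e2 := qm_defect hM (s x) (s y).
rewrite QV // in e1; move: e1 e2.
set A := nu (_ * _ * _)%g; set B := nu (s x * s y)%g.
rewrite !ler_norml => /andP[? ?] /andP[? ?]; apply/andP; split; lra.
Qed.

Lemma U_sub_A1 : U `<=` QNG i `&` (dtau_rep i p s @^-1` @Bb3 Gam).
Proof.
move=> _ [h [_ [hh [[nu Qnu <-] ->]]]]; split.
  apply: subspaceD; [exact: subspace_QNG|exact: H1NG_QNG|exact: restr_QNG].
rewrite /preimage /= (linD dtau_rep_linear); apply: subspaceD; first exact: subspace_Bb3.
  exists 0; first exact: subspace0 (@subspace_bounded2 Gam).
  by rewrite (lin0 (@delta2_linear Gam)) /dtau_rep (delta2_tau_rep_Hom1 hh).
have [b bb e] := tau_rep_restr Qnu.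
by exists b => //; rewrite /dtau_rep -/(restr nu) e (linB (@delta2_linear Gam)) delta2_delta1 subr0.
Qed.

Lemma dtau_rep_ker_c3 (mu : C1 N) : QNG i mu ->
  (@Zb3 Gam `&` @B3 Gam) (dtau_rep i p s mu).
Proof.
move=> Qmu; split; last by exists (tau_rep i p s mu).
split; last by rewrite /dtau_rep delta3_delta2.
have [K hK] := delta1_mu_s_pull2_bounded Qmu.
exists (K + K + K + K) => x y z.
rewrite /dtau_rep -[x]ps -[y]ps -[z]ps -delta2_pull2 //.
have := congr1 (fun f => f (s x) (s y) (s z)) (delta2_delta1 (mu_s i p s mu)).
rewrite /delta2 /pull2 !cochainE.
have := hK (s y) (s z); have := hK (s x * s y)%g (s z); have := hK (s x) (s y * s z)%g.
have := hK (s x) (s y); rewrite !hp.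
set a1 := delta1 _ (s y) (s z); set a2 := delta1 _ (s x * s y)%g (s z).
set a3 := delta1 _ (s x) (s y * s z)%g; set a4 := delta1 _ (s x) (s y).
rewrite !ler_norml => /andP[? ?] /andP[? ?] /andP[? ?] /andP[? ?] ?.
apply/andP; split; lra.
Qed.

Section CocycleData.
Variables (f : C1 G) (z0 : C2 Gam) (be : C2 G) (Mb : RR).
Hypotheses (z0_cocycle : delta2 z0 = 0) (beM : forall a b, `|be a b| <= Mb).
Hypothesis fM : forall a b, f (a * b)%g = f a + f b - z0 (p a) (p b) + be a b.

Lemma cocycle_1l gam : z0 1%g gam = z0 1%g 1%g.
Proof.
have := congr1 (fun F => F 1%g 1%g gam) z0_cocycle.
by rewrite /delta2 !mul1g !cochainE => e; lra.
Qed.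

Lemma restr_defect a b : `|delta1 (restr f) a b| <= `|z0 1%g 1%g| + Mb.
Proof.
rewrite /delta1 /restr hi fM !p_i.
have := beM (i a) (i b); set B := be _ _; have [? ?] := normr_bounds (z0 1%g 1%g).
rewrite !ler_norml => /andP[? ?]; apply/andP; split; lra.
Qed.

Variables (mu : C1 N) (D : RR).
Hypotheses (Qmu : Q mu) (muD : forall n, `|mu n - restr f n| <= D).

(* On [i N], [f] is invariant under conjugation up to a bounded error, which
   homogeneity removes. *)
Lemma restr_homogenization_G_invariant : G_invariant i mu.
Proof.
move=> g n n' e; apply/eqP; rewrite -subr_eq0; apply/eqP.
pose cg := f g + f g^-1%g - z0 (p g) 1%g - z0 (p g) (p g^-1%g).
apply: (@nat_bounded_eq0 _ (D + D + (Mb + Mb) + `|cg|)) => k.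
have ek : i (n' ^+ k)%g = (g * i (n ^+ k) * g^-1)%g by rewrite !(group_homX hi) e conjgXn.
have fconj x : p x = 1%g -> f (g * x * g^-1)%g = f x + cg + be g x + be (g * x)%g g^-1%g.
  by move=> px; rewrite fM fM hp px mulg1 /cg; ring.
have e1 := muD (n' ^+ k)%g; have e2 := muD (n ^+ k)%g.
rewrite /restr ek fconj ?p_i // in e1; rewrite /restr in e2.
rewrite !Qmu.2 in e1 e2.
have := beM g (i (n ^+ k))%g; have := beM (g * i (n ^+ k))%g g^-1%g.
have [? ?] := normr_bounds cg.
rewrite -[k%:R]ger0_norm ?ler0n // -normrM mulrBr.
move: e1 e2; set B1 := be g _; set B2 := be _ g^-1%g; set F := f _.
rewrite !ler_norml => /andP[? ?] /andP[? ?] /andP[? ?] /andP[? ?].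
apply/andP; split; lra.
Qed.

Lemma tau_rep_restr_homogenization :
  bounded2 (tau_rep i p s mu - (z0 - delta1 (fun gam => f (s gam)))).
Proof.
exists (D + Mb + Mb + `|z0 1%g 1%g|) => x y.
rewrite !cochainE tau_repE homogeneous1; last exact: Qmu.2.
rewrite /delta1.
have e1 := fM (s x) (s y); have e2 := fM (i (ext_cocycle x y)) (s (x * y)%g).
rewrite p_i i_ext_cocycle mulgVK !ps cocycle_1l in e2; rewrite !ps in e1.
have := muD (ext_cocycle x y); rewrite /restr i_ext_cocycle.
have := beM (s x) (s y); have := beM (s x * s y * (s (x * y)%g)^-1)%g (s (x * y)%g).
have [? ?] := normr_bounds (z0 1%g 1%g).
move: e1 e2; set Fi := f (_ * _ * _)%g.
rewrite !ler_norml => ? ? /andP[? ?] /andP[? ?] /andP[? ?].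
apply/andP; split; lra.
Qed.

End CocycleData.

(* [mu] corresponds to [w] when [tau(mu)] is a bounded cochain plus a cocycle
   [z], so that [d(tau_/b(mu)) = 0], and [w] is [p^* z] modulo the image of
   [p^* o c_Gamma]. *)
Definition corresp : set (C1 N * C2 G) := [set mw |
  QNG i mw.1 /\ exists b z, [/\ bounded2 b, Z2 z, tau_rep i p s mw.1 = b + z
                            & im_pstar_c p (mw.2 - pull2 p z)]].

Lemma subspace_corresp : is_subspace corresp.
Proof.
split.
  split; first exact: subspace0 subspace_QNG.
  exists 0, 0; split.
  - exact: subspace0 (@subspace_bounded2 Gam).
  - exact: subspace0 (@subspace_Z2 Gam).
  - by rewrite addr0 (lin0 tau_rep_linear).
  - by rewrite (lin0 (pull2_linear p)) subr0; exact: subspace0 (subspace_im_pstar_c p).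
move=> a [x x'] [y y'] [/= Qx [bx [zx [bbx Zzx ex hx]]]] [/= Qy [by_ [zy [bby Zzy ey hy]]]].
split; first exact: subspace_QNG.2.
exists (a *: bx + by_), (a *: zx + zy); split.
- exact: (@subspace_bounded2 Gam).2.
- exact: (@subspace_Z2 Gam).2.
- by rewrite /= tau_rep_linear ex ey scalerDr addrACA.
- rewrite /= (pull2_linear p) (_ : _ - _ = a *: (x' - pull2 p zx) + (y' - pull2 p zy)).
    exact: (subspace_im_pstar_c p).2.
  by rewrite scalerBr opprD addrACA.
Qed.

Let A1 := QNG i `&` (dtau_rep i p s @^-1` @Bb3 Gam).

Lemma corresp_total_l mu : A1 mu ->
  exists2 w, (@im_cG G `&` im_pstar p) w & corresp (mu, w).
Proof.
move=> [Qmu [b0 bb0 eb0]].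
pose z := tau_rep i p s mu - b0.
have Zz : delta2 z = 0 by rewrite (linB (@delta2_linear Gam)) eb0 subrr.
exists (pull2 p z); last first.
  split => //; exists b0, z; split => //; first by rewrite addrC subrK.
  by rewrite subrr; exact: subspace0 (subspace_im_pstar_c p).
split; last by apply: sumsetl; [exact: subspace_B2|exists z].
have [K hK] := delta1_mu_s_pull2_bounded Qmu.
exists (pull2 p z - delta1 (mu_s i p s mu)), (delta1 (mu_s i p s mu)).
split; last by split; [exists (mu_s i p s mu)|rewrite subrK].
split.
  move: bb0 => [Mb hMb]; exists (K + Mb) => x y.
  rewrite /z /pull2 !cochainE.
  move: (hK x y) (hMb (p x) (p y)); set A := tau_rep _ _ _ _ _ _; set B := b0 _ _.
  rewrite !ler_norml => /andP[? ?] /andP[? ?]; apply/andP; split; lra.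
rewrite (linB (@delta2_linear G)) delta2_delta1 subr0.
by do 3!apply/funext => ?; rewrite delta2_pull2 // Zz.
Qed.

Lemma corresp_total_r w : (@im_cG G `&` im_pstar p) w ->
  exists2 mu, A1 mu & corresp (mu, w).
Proof.
move=> [[be [_ [[[Mb beM] _] [[f1 _ <-] ew]]]] [_ [_ [[z0 Zz0 <-] [[f0 _ <-] ew']]]]].
have {}Zz0 : delta2 z0 = 0 := Zz0.
pose f : C1 G := fun g => f1 g - f0 g.
have fM a b : f (a * b)%g = f a + f b - z0 (p a) (p b) + be a b.
  have := congr1 (fun F => F a b) (etrans (esym ew') ew).
  by rewrite /pull2 /delta1 /f !cochainE => e; lra.
have [mu Qmu muD] := homogenize (restr_defect beM fM).
have Gmu := restr_homogenization_G_invariant beM fM Qmu muD.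
have := tau_rep_restr_homogenization Zz0 beM fM Qmu muD.
set z := z0 - _; set b := _ - z => bb.
have Zz : delta2 z = 0.
  by rewrite (linB (@delta2_linear Gam)) Zz0 delta2_delta1 subrr.
have eb : tau_rep i p s mu = b + z by rewrite subrK.
clearbody b.
exists mu.
  split => //; exists b => //.
  by rewrite /dtau_rep eb (linD (@delta2_linear Gam)) Zz addr0.
split => //; exists b, z; split => //.
apply: sumsetr; first exact: (subspace_image (pull2_linear p) (@subspace_Zb2 Gam)).
exists (f0 + (fun g => f (s (p g)))) => //.
rewrite /= ew' (linB (pull2_linear p)) pull2_delta1 // (linD (@delta1_linear G)).
by do 2!apply/funext => ?; rewrite !cochainE; ring.
Qed.

Lemma corresp_U_im_pstar_c mu w : corresp (mu, w) -> U mu -> im_pstar_c p w.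
Proof.
move=> [_ [b [z [bb Zz ez /= hw]]]] [h [_ [hh [[nu Qnu <-] emu]]]].
have [b1 bb1 eb1] := tau_rep_restr Qnu.
pose zb := z - tau_rep i p s h + delta1 (fun gam => nu (s gam)).
have zbE : zb = b1 - b.
  move: ez; rewrite /= emu (linD tau_rep_linear) -/(restr nu) eb1 => ez.
  apply/funext => x; apply/funext => y; move/(congr1 (fun F => F x y)): ez.
  by rewrite /zb !cochainE => e; lra.
have Zbzb : Zb2 zb.
  split; first by rewrite zbE; apply: subspaceB => //; exact: subspace_bounded2.
  rewrite /Z2 /mkset /zb (linD (@delta2_linear Gam)) (linB (@delta2_linear Gam)).
  by rewrite delta2_delta1 (delta2_tau_rep_Hom1 hh) addr0 subr0; exact: Zz.
have pzE : pull2 p z = pull2 p zb + delta1 (fun g => mu_s i p s h g - nu (s (p g))).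
  rewrite (linB (@delta1_linear G)) -(pull2_tau_rep_Hom1 hh) /zb.
  by do 2!apply/funext => ?; rewrite /pull2 /delta1 !cochainE hp; ring.
rewrite -(subrK (pull2 p z) w); apply: (subspaceD (subspace_im_pstar_c p) hw).
by rewrite pzE; exists (pull2 p zb), (delta1 (fun g => mu_s i p s h g - nu (s (p g))));
  do !split => //; [exists zb|exists (fun g => mu_s i p s h g - nu (s (p g)))].
Qed.

Lemma corresp_im_pstar_c_U mu w : corresp (mu, w) -> im_pstar_c p w -> U mu.
Proof.
move=> [/= Qmu [b [z [[Mb bM] Zz ez /= hw]]]] hw0.
have : im_pstar_c p (pull2 p z).
  have -> : pull2 p z = w - (w - pull2 p z) by rewrite opprB addrC subrK.
  by apply: subspaceB => //; exact: subspace_im_pstar_c.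
move=> [_ [_ [[z1 [[Mz1 z1M] _] <-] [[f _ <-] ef]]]].
have fE g1 g2 : delta1 f g1 g2 = z (p g1) (p g2) - z1 (p g1) (p g2).
  by move/(congr1 (fun F => F g1 g2)): ef; rewrite /pull2 !cochainE => e; lra.
have [K hK] := delta1_mu_s_pull2_bounded Qmu.
pose psi : C1 G := fun g => mu_s i p s mu g - f g.
have psiM g1 g2 : `|delta1 psi g1 g2| <= K + Mb + Mz1.
  have -> : delta1 psi g1 g2 = (delta1 (mu_s i p s mu) g1 g2 - tau_rep i p s mu (p g1) (p g2))
      + b (p g1) (p g2) + z1 (p g1) (p g2).
    have := fE g1 g2; move/(congr1 (fun F => F (p g1) (p g2))): ez.
    by rewrite /psi /delta1 !cochainE => e1 e2; lra.
  move: (hK g1 g2) (bM (p g1) (p g2)) (z1M (p g1) (p g2)).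
  set X := _ - _; set B := b _ _; set Z := z1 _ _.
  rewrite !ler_norml => /andP[? ?] /andP[? ?] /andP[? ?]; apply/andP; split; lra.
have [nu Qnu nuD] := homogenize psiM.
pose k := z 1%g 1%g - z1 1%g 1%g.
apply: (@U_of_close _ (fun n => f (i n) - k) nu Qmu) => //.
  by move=> n1 n2; have := fE (i n1) (i n2); rewrite !p_i /delta1 hi -/k => e; lra.
set D := _ + _ in nuD; exists (D + `|k|) => n.
have := nuD (i n); rewrite /psi mu_s_i; have [? ?] := normr_bounds k.
set F := f _; set V := nu _; rewrite !ler_norml => /andP[? ?]; apply/andP; split; lra.
Qed.

Lemma dimW_eq : dimW i = (dim_im_dtau i p s + dim_second p)%E.
Proof.
rewrite /dimW (qdim_add dtau_rep_linear subspace_QNG (@subspace_Bb3 Gam) subspace_U U_sub_A1).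
congr (_ + _)%E; apply: (qdim_transfer subspace_corresp).
- exact: corresp_total_l.
- exact: corresp_total_r.
- by move=> mu w c; split; [exact: corresp_U_im_pstar_c|exact: corresp_im_pstar_c_U].
Qed.

Lemma dim_im_dtau_le : (dim_im_dtau i p s <= dim_ker_c3 Gam)%E.
Proof. by apply: qdim_le => // _ [mu Qmu <-]; exact: dtau_rep_ker_c3. Qed.

End Extension.

Lemma dim_second_le (G Gam : groupType) (p : G -> Gam) : (dim_second p <= dim_H2 G)%E.
Proof.
apply: qdim_le => [_ [[a [_ [[_ Za] [[f _ <-] ->]]]] _]|x Bx].
  rewrite /Z2 /mkset (linD (@delta2_linear G)) delta2_delta1 addr0; exact: Za.
by apply: sumsetr => //; exact: (subspace_image (pull2_linear p) (@subspace_Zb2 Gam)).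
Qed.

Local Open Scope ereal_scope.

Theorem theorem7p11 (N G Gam : groupType) (i : N -> G) (p : G -> Gam)
  (s : Gam -> G) :
  short_exact i p ->
  (forall gam, p (s gam) = gam) -> s 1%g = 1%g ->
  dimW i = dim_im_dtau i p s + dim_second p /\
  dimW i <= dim_ker_c3 Gam + dim_H2 G.
Proof.
move=> hse ps s1; have dimWE := dimW_eq hse ps s1; split => //.
by rewrite dimWE leeD // ?dim_im_dtau_le ?dim_second_le.
Qed.
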